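(* For every $n\ge 1$, \[ \mathrm{URL}_n=\{\mathrm{shape}(\Psi(\sigma)) : \sigma\in \mathrm{And}^{I}_n\}=\{\mathrm{shape}(\Psi(\sigma)) : \sigma\in \mathrm{And}^{II}_n\}=\{\mathrm{shape}(\Psi(\sigma)) : \sigma\in \mathrm{RS}_n\}. \]
   Context: A binary tree is a rooted tree in which every vertex has no child, a single left child, a single right child, or both. An increasing binary tree is a binary tree with distinct labels increasing along every path from the root. The map $\Psi$ sends a word $\pi$ of distinct integers to an increasing binary tree: $\Psi(\emptyset)=\emptyset$; otherwise write $\pi=\sigma\, i\,\tau$ with $i$ the least letter of $\pi$, and let $\Psi(\pi)$ have root $i$, left subtree $\Psi(\sigma)$ and right subtree $\Psi(\tau)$. $\mathrm{shape}(T)$ is the underlying unlabeled binary tree of $T$. $\mathrm{URL}_n$ is the set of unlabeled rooted binary trees with $n$ vertices in which no vertex has a left child but no right child. Andr\'e permutations: the empty word and one-letter words are Andr\'e I and Andr\'e II. A word $\sigma$ of $n\ge2$ distinct integers, written $\sigma=\tau\,\min(\sigma)\,\tau'$, is Andr\'e I (resp. II) if $\tau,\tau'$ are Andr\'e I (resp. II) and the largest (resp. smallest) letter of $\tau\tau'$ lies in $\tau'$. $\mathrm{And}^{I}_n$, $\mathrm{And}^{II}_n$ denote these permutations of $[n]$. A permutation $\sigma=\sigma_1\cdots\sigma_n$ of $[n]$ is simsun if $\sigma_n=n$ and for every $k\in[n]$ the subword of $\sigma$ formed by the letters $1,\dots,k$ has no index $i$ with $w_i>w_{i+1}>w_{i+2}$.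 $\mathrm{RS}_n$ is the set of simsun permutations of $[n]$. *)

From mathcomp Require Import all_boot.
Set Implicit Arguments. Unset Strict Implicit. Unset Printing Implicit Defensive.

Inductive btree := BLeaf | BNode of btree & btree.

Inductive ltree := LLeaf | LNode of ltree & nat & ltree.

Fixpoint tshape (t : ltree) : btree :=
  match t with
  | LLeaf => BLeaf
  | LNode l _ r => BNode (tshape l) (tshape r)
  end.

Fixpoint bsize (t : btree) : nat :=
  match t with BLeaf => 0 | BNode l r => (bsize l + bsize r).+1 end.

Definition is_node (t : btree) : bool := if t is BNode _ _ then true else false.

Fixpoint no_lonely_left (t : btree) : bool :=
  match t with
  | BLeaf => true
  | BNode l r => ~~ (is_node l && ~~ is_node r) && no_lonely_left l && no_lonely_left r
  end.

Definition URL (n : nat) (t : btree) : Prop := bsize t = n /\ no_lonely_left t.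

(* least / largest letter of a word (meaningful for nonempty words) *)
Definition wmin (w : seq nat) : nat := foldr minn (head 0 w) w.
Definition wmax (w : seq nat) : nat := foldr maxn 0 w.

Definition wleft (w : seq nat) : seq nat := take (index (wmin w) w) w.
Definition wright (w : seq nat) : seq nat := drop (index (wmin w) w).+1 w.

(* Psi, defined by recursion with fuel; fuel = size w suffices since the
   two factors are strictly shorter. *)
Fixpoint psi_fuel (k : nat) (w : seq nat) : ltree :=
  match k with
  | 0 => LLeaf
  | k'.+1 => if w is [::] then LLeaf
             else LNode (psi_fuel k' (wleft w)) (wmin w) (psi_fuel k' (wright w))
  end.
Definition Psi (w : seq nat) : ltree := psi_fuel (size w) w.

Fixpoint andreI_fuel (k : nat) (w : seq nat) : bool :=
  match k with
  | 0 => size w <= 1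
  | k'.+1 =>
    (size w <= 1) ||
    [&& andreI_fuel k' (wleft w), andreI_fuel k' (wright w)
      & wmax (wleft w ++ wright w) \in wright w]
  end.
Definition andreI (w : seq nat) : bool := andreI_fuel (size w) w.

Fixpoint andreII_fuel (k : nat) (w : seq nat) : bool :=
  match k with
  | 0 => size w <= 1
  | k'.+1 =>
    (size w <= 1) ||
    [&& andreII_fuel k' (wleft w), andreII_fuel k' (wright w)
      & wmin (wleft w ++ wright w) \in wright w]
  end.
Definition andreII (w : seq nat) : bool := andreII_fuel (size w) w.

Definition is_perm (n : nat) (w : seq nat) : bool := perm_eq w (iota 1 n).

Definition AndI (n : nat) (w : seq nat) : Prop := is_perm n w /\ andreI w.
Definition AndII (n : nat) (w : seq nat) : Prop := is_perm n w /\ andreII w.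

Definition no_double_descent (s : seq nat) : bool :=
  all (fun i => ~~ ((nth 0 s i > nth 0 s i.+1) && (nth 0 s i.+1 > nth 0 s i.+2)))
      (iota 0 (size s - 2)).

Definition simsun (n : nat) (w : seq nat) : Prop :=
  is_perm n w /\ nth 0 w n.-1 = n /\
  forall k, 1 <= k <= n -> no_double_descent [seq x <- w | x <= k].

From mathcomp Require Import all_boot zify.
Set Implicit Arguments. Unset Strict Implicit. Unset Printing Implicit Defensive.

(* [Psi] is a bijection from words of distinct letters onto increasing trees,
   inverse to the in-order reading [word], so it suffices to decide which
   increasing trees have an Andre or simsun word.  For Andre I (resp. II) words
   the defining condition becomes local: at each vertex the largest (resp.
   smallest) label below it lies in its right subtree, which forces a right
   child wherever there is a left child.  In a simsun word, a vertex with a left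
   child but no right child would produce a double descent once the word is
   restricted to the letters up to the last letter of that left subtree, or else
   a final descent, contradicting that the word ends with [n].
   Conversely, a tree without such vertices is realised by labelling it in
   preorder (Andre I), in preorder visiting right subtrees first (Andre II), or
   along the right spine with every left subtree labelled right-first (simsun).
   Restricting a word of an increasing tree to the letters [<= k] reads off a
   pruned tree; for the last labelling the left subtrees hanging off the right
   spine of every pruning still have no lonely left child, and the word of such
   a tree has no double descent. *)

Fixpoint word (L : ltree) : seq nat :=
  if L is LNode l x r then word l ++ x :: word r else [::].

Fixpoint incr (L : ltree) : bool :=
  if L is LNode l x r then
    [&& all (fun y => x < y) (word l ++ word r), incr l & incr r]
  else true.

Lemma size_word L : size (word L) = bsize (tshape L).
Proof. by elim: L => //= l IHl x r IHr; rewrite size_cat /= addnS IHl IHr. Qed.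

Lemma word_nil L : word L = [::] -> L = LLeaf.
Proof. by case: L => // l x r /=; case: (word l). Qed.

Lemma is_node_word L : is_node (tshape L) = (word L != [::]).
Proof. by case: L => //= l x r; case: (word l). Qed.

Lemma foldr_minn_le h w y : y \in w -> foldr minn h w <= y.
Proof.
elim: w => //= a w IH; rewrite inE => /orP[/eqP->|/IH]; first exact: geq_minl.
exact/leq_trans/geq_minr.
Qed.

Lemma foldr_minn_mem h w : foldr minn h w \in h :: w.
Proof.
elim: w => [|a w IH] /=; first exact: mem_head.
case: leqP => _; first by rewrite !inE eqxx orbT.
by move: IH; rewrite !inE => /predU1P[->|->]; rewrite ?eqxx ?orbT.
Qed.

Lemma wmin_mem w : w != [::] -> wmin w \in w.
Proof.
case: w => // a w _; rewrite /wmin; have := foldr_minn_mem a (a :: w).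
by rewrite inE => /predU1P[->|//]; rewrite mem_head.
Qed.

Lemma wmin_eq w x : x \in w -> {in w, forall y, x <= y} -> wmin w = x.
Proof.
move=> xw x_min; apply/eqP; rewrite eqn_leq foldr_minn_le // x_min //.
by apply: wmin_mem; apply: contraTneq xw => ->.
Qed.

Lemma wmax_eq w x : x \in w -> {in w, forall y, y <= x} -> wmax w = x.
Proof.
move=> xw x_max; apply/eqP; rewrite eqn_leq; apply/andP; split.
  elim: w x_max {xw} => //= a w IH x_max; rewrite geq_max x_max ?mem_head //.
  by apply: IH => y yw; apply: x_max; rewrite inE yw orbT.
elim: w xw {x_max} => //= a w IH; rewrite inE leq_max.
by case/predU1P => [->|/IH ->]; rewrite ?leqnn ?orbT.
Qed.

Lemma wleft_wmin_wright w : w != [::] -> wleft w ++ wmin w :: wright w = w.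
Proof.
move=> /wmin_mem xw; rewrite -[RHS](cat_take_drop (index (wmin w) w)).
by rewrite (drop_nth 0) ?index_mem // nth_index.
Qed.

Lemma split_node l x r : all (fun y => x < y) (word l ++ word r) ->
  [/\ wmin (word l ++ x :: word r) = x,
      wleft (word l ++ x :: word r) = word l &
      wright (word l ++ x :: word r) = word r].
Proof.
move=> /allP x_lt.
have x_notin_l : x \notin word l.
  by apply/negP => xl; have := x_lt x; rewrite mem_cat xl ltnn => /(_ isT).
have min_x : wmin (word l ++ x :: word r) = x.
  apply: wmin_eq => [|y]; first by rewrite mem_cat mem_head orbT.
  by rewrite mem_cat inE orbCA -mem_cat => /predU1P[->//|/x_lt/ltnW].
have index_x : index x (word l ++ x :: word r) = size (word l).
  by rewrite index_cat (negbTE x_notin_l) /= eqxx addn0.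
rewrite /wleft /wright min_x index_x take_size_cat // -cat_rcons.
by rewrite drop_size_cat ?size_rcons.
Qed.

Lemma Psi_word L : incr L -> Psi (word L) = L.
Proof.
rewrite /Psi; have: size (word L) <= size (word L) by [].
move: {2 3}(size (word L)) => k.
elim: L k => [|l IHl x r IHr] [|k] //=; rewrite size_cat /= addnS // ltnS => size_lr.
case/and3P=> x_lt incr_l incr_r.
case E: (word l ++ x :: word r) => [|? ?]; first by case: (word l) E.
rewrite -E; have [-> -> ->] := split_node x_lt.
by rewrite IHl ?IHr //; apply: leq_trans size_lr; rewrite ?leq_addl ?leq_addr.
Qed.

Lemma incr_word_Psi s : uniq s -> incr (Psi s) /\ word (Psi s) = s.
Proof.
rewrite /Psi; have: size s <= size s by [].
move: {2 3 4}(size s) => k; elim: k s => [|k IH] [|a s'] //.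
set s := a :: s' => size_s uniq_s; rewrite [psi_fuel _ _]/=.
have s_split := wleft_wmin_wright (isT : s != [::]).
move: uniq_s size_s; rewrite -{1 2}s_split cat_uniq /= size_cat /= addnS ltnS.
case/and3P=> uniq_l /norP[min_notin_l _] /andP[min_notin_r uniq_r] size_lr.
have [incr_l ->] := IH _ (leq_trans (leq_addr _ _) size_lr) uniq_l.
have [incr_r ->] := IH _ (leq_trans (leq_addl _ _) size_lr) uniq_r.
split=> //=; rewrite incr_l incr_r !andbT; apply/allP => y y_lr.
have y_in_s : y \in s by rewrite -s_split mem_cat inE orbCA -mem_cat y_lr orbT.
have : wmin s \notin wleft s ++ wright s by rewrite mem_cat negb_or min_notin_l.
by rewrite ltn_neqAle foldr_minn_le // andbT; apply: contraNneq => ->.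
Qed.

Lemma is_perm_Psi n s : is_perm n s ->
  [/\ incr (Psi s), word (Psi s) = s & bsize (tshape (Psi s)) = n].
Proof.
move=> perm_s; have [incr_L word_L] : incr (Psi s) /\ word (Psi s) = s.
  by apply: incr_word_Psi; rewrite (perm_uniq perm_s) iota_uniq.
by rewrite -size_word word_L (perm_size perm_s) size_iota.
Qed.

Fixpoint andre_tree (ext : seq nat -> nat) (L : ltree) : bool :=
  if L is LNode l _ r then
    nilp (word l ++ word r) ||
    [&& andre_tree ext l, andre_tree ext r & ext (word l ++ word r) \in word r]
  else true.

Lemma andre_tree_no_lonely_left ext L :
  andre_tree ext L -> no_lonely_left (tshape L).
Proof.
elim: L => //= l IHl _ r IHr /orP[|/and3P[andre_l andre_r ext_r]].
  by rewrite /nilp size_cat addn_eq0 !size_eq0 => /andP[/eqP/word_nil-> /eqP/word_nil->].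
rewrite IHl // IHr // !andbT !is_node_word negbK.
by apply: contraL ext_r => /andP[_ /eqP->].
Qed.

Lemma andreI_word L : incr L -> andreI (word L) = andre_tree wmax L.
Proof.
rewrite /andreI; have: size (word L) <= size (word L) by [].
move: {2 3}(size (word L)) => k.
elim: L k => [|l IHl x r IHr] [|k] //=; rewrite size_cat /= addnS // ltnS => size_lr.
case/and3P=> x_lt incr_l incr_r; have [_ -> ->] := split_node x_lt.
by rewrite /nilp size_cat ltnS leqn0 IHl ?IHr //;
  apply: leq_trans size_lr; rewrite ?leq_addl ?leq_addr.
Qed.

Lemma andreII_word L : incr L -> andreII (word L) = andre_tree wmin L.
Proof.
rewrite /andreII; have: size (word L) <= size (word L) by [].
move: {2 3}(size (word L)) => k.
elim: L k => [|l IHl x r IHr] [|k] //=; rewrite size_cat /= addnS // ltnS => size_lr.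
case/and3P=> x_lt incr_l incr_r; have [_ -> ->] := split_node x_lt.
by rewrite /nilp size_cat ltnS leqn0 IHl ?IHr //;
  apply: leq_trans size_lr; rewrite ?leq_addl ?leq_addr.
Qed.

Definition labelled_from (m : nat) (L : ltree) : bool :=
  incr L && perm_eq (word L) (iota m (size (word L))).

Lemma labelled_from_incr m L : labelled_from m L -> incr L.
Proof. by case/andP. Qed.

Lemma labelled_from_is_perm L : labelled_from 1 L -> is_perm (bsize (tshape L)) (word L).
Proof. by case/andP=> _; rewrite size_word. Qed.

Lemma mem_labelled_from m L y : labelled_from m L ->
  (y \in word L) = (m <= y < m + size (word L)).
Proof. by case/andP=> _ /perm_mem->; rewrite mem_iota. Qed.

Lemma labelled_from_node l m r : incr l -> incr r ->
  perm_eq (word l ++ word r) (iota m.+1 (size (word l ++ word r))) ->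
  labelled_from m (LNode l m r).
Proof.
move=> incr_l incr_r perm_lr; rewrite /labelled_from /= incr_l incr_r.
rewrite size_cat /= addnS -size_cat /=.
rewrite -cat1s perm_catCA perm_cons perm_lr !andbT.
by apply/allP => y; rewrite (perm_mem perm_lr) mem_iota => /andP[].
Qed.

Lemma labelled_from_node_lr l m r : labelled_from m.+1 l ->
  labelled_from (m.+1 + size (word l)) r -> labelled_from m (LNode l m r).
Proof.
case/andP=> incr_l perm_l /andP[incr_r perm_r].
by apply: labelled_from_node; rewrite // size_cat iotaD perm_cat.
Qed.

Lemma labelled_from_node_rl l m r : labelled_from m.+1 r ->
  labelled_from (m.+1 + size (word r)) l -> labelled_from m (LNode l m r).
Proof.
case/andP=> incr_r perm_r /andP[incr_l perm_l].
apply: labelled_from_node; rewrite // perm_catC size_cat addnC iotaD.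
exact: perm_cat.
Qed.

Fixpoint preorder_label (t : btree) (m : nat) : ltree :=
  if t is BNode l r then
    LNode (preorder_label l m.+1) m (preorder_label r (m.+1 + bsize l))
  else LLeaf.

Fixpoint rpreorder_label (t : btree) (m : nat) : ltree :=
  if t is BNode l r then
    LNode (rpreorder_label l (m.+1 + bsize r)) m (rpreorder_label r m.+1)
  else LLeaf.

Fixpoint simsun_label (t : btree) (m : nat) : ltree :=
  if t is BNode l r then
    LNode (rpreorder_label l m.+1) m (simsun_label r (m.+1 + bsize l))
  else LLeaf.

Lemma tshape_preorder_label t m : tshape (preorder_label t m) = t.
Proof. by elim: t m => //= l IHl r IHr m; rewrite IHl IHr. Qed.

Lemma tshape_rpreorder_label t m : tshape (rpreorder_label t m) = t.
Proof. by elim: t m => //= l IHl r IHr m; rewrite IHl IHr. Qed.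

Lemma tshape_simsun_label t m : tshape (simsun_label t m) = t.
Proof. by elim: t m => //= l IHl r IHr m; rewrite tshape_rpreorder_label IHr. Qed.

Lemma labelled_preorder_label t m : labelled_from m (preorder_label t m).
Proof.
elim: t m => //= l IHl r IHr m; apply: labelled_from_node_lr => //.
by rewrite size_word tshape_preorder_label.
Qed.

Lemma labelled_rpreorder_label t m : labelled_from m (rpreorder_label t m).
Proof.
elim: t m => //= l IHl r IHr m; apply: labelled_from_node_rl => //.
by rewrite size_word tshape_rpreorder_label.
Qed.

Lemma labelled_simsun_label t m : labelled_from m (simsun_label t m).
Proof.
elim: t m => //= l _ r IHr m; apply: labelled_from_node_lr.
  exact: labelled_rpreorder_label.
by rewrite size_word tshape_rpreorder_label.
Qed.

Lemma andre_preorder_label t m :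
  no_lonely_left t -> andre_tree wmax (preorder_label t m).
Proof.
elim: t m => [|l IHl r IHr] m //= /andP[/andP[root_nll nll_l] nll_r].
case: r root_nll nll_r IHr => [|r1 r2] root_nll nll_r IHr.
  by case: l root_nll {IHl nll_l}.
set r := BNode r1 r2 in nll_r IHr *.
rewrite IHl // IHr //; apply/orP; right.
have mem_l y := mem_labelled_from y (labelled_preorder_label l m.+1).
have mem_r y := mem_labelled_from y (labelled_preorder_label r (m.+1 + bsize l)).
rewrite !size_word !tshape_preorder_label in mem_l mem_r.
have top_r : m + bsize l + bsize r \in word (preorder_label r (m.+1 + bsize l)).
  by rewrite mem_r /=; lia.
have top_lr : m + bsize l + bsize r \in word (preorder_label l m.+1) ++
                                        word (preorder_label r (m.+1 + bsize l)).
  by rewrite mem_cat top_r orbT.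
by rewrite (wmax_eq top_lr) // => y; rewrite mem_cat mem_l mem_r; lia.
Qed.

Lemma andre_rpreorder_label t m :
  no_lonely_left t -> andre_tree wmin (rpreorder_label t m).
Proof.
elim: t m => [|l IHl r IHr] m //= /andP[/andP[root_nll nll_l] nll_r].
case: r root_nll nll_r IHr => [|r1 r2] root_nll nll_r IHr.
  by case: l root_nll {IHl nll_l}.
set r := BNode r1 r2 in nll_r IHr *.
rewrite IHl // IHr //; apply/orP; right.
have mem_l y := mem_labelled_from y (labelled_rpreorder_label l (m.+1 + bsize r)).
have mem_r y := mem_labelled_from y (labelled_rpreorder_label r m.+1).
rewrite !size_word !tshape_rpreorder_label in mem_l mem_r.
have bot_r : m.+1 \in word (rpreorder_label r m.+1) by rewrite mem_r /=; lia.
have bot_lr : m.+1 \in word (rpreorder_label l (m.+1 + bsize r)) ++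
                       word (rpreorder_label r m.+1).
  by rewrite mem_cat bot_r orbT.
by rewrite (wmin_eq bot_lr) // => y; rewrite mem_cat mem_l mem_r; lia.
Qed.

Fixpoint dd_free (s : seq nat) : bool :=
  if s is a :: s' then
    (if s' is b :: c :: _ then ~~ ((a > b) && (b > c)) else true) && dd_free s'
  else true.

Fixpoint ends_ascending (s : seq nat) : bool :=
  if s is a :: s' then (if s' is [:: b] then a < b else ends_ascending s')
  else true.

Lemma no_double_descentE s : no_double_descent s = dd_free s.
Proof.
elim: s => [|a [|b [|c s]] IH] //.
transitivity (~~ ((a > b) && (b > c)) && no_double_descent [:: b, c & s]);
  last by rewrite IH.
rewrite /no_double_descent.
have -> : size [:: a, b, c & s] - 2 = (size s).+1 by rewrite /=; lia.
have -> : size [:: b, c & s] - 2 = size s by rewrite /=; lia.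
by rewrite /= [iota 1 _](iotaDl 1 0) all_map.
Qed.

Lemma ends_ascending_behead a s : ends_ascending (a :: s) -> ends_ascending s.
Proof. by case: s => [|b [|c s]]. Qed.

Lemma ends_ascending_cat u w :
  1 < size w -> ends_ascending (u ++ w) = ends_ascending w.
Proof.
move=> w_gt1; elim: u => //= a u ->.
have : 1 < size (u ++ w) by rewrite size_cat ltn_addl.
by case: (u ++ w) => [|b [|c t]].
Qed.

Lemma dd_free_cat_cons u x v : dd_free u -> ends_ascending u ->
  dd_free v -> all (fun y => x < y) v -> dd_free (u ++ x :: v).
Proof.
move=> + + dd_v x_lt; elim: u => [|a u IH] /=.
  by move: dd_v x_lt; case: v => [|y [|z v]] //= -> /andP[x_y _]; rewrite andbT; lia.
case/andP=> dd_top dd_u asc; rewrite IH ?(ends_ascending_behead asc) // andbT.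
case: u asc dd_top {IH dd_u} => [|b [|c u]] //= asc _.
  by case: v x_lt {dd_v} => [|y v] //= /andP[x_y _]; lia.
by lia.
Qed.

Lemma dd_free_double_descent p a b c s :
  b < a -> c < b -> dd_free (p ++ [:: a, b, c & s]) = false.
Proof. by move=> b_a c_b; elim: p => [|y p IH] /=; rewrite ?b_a ?c_b ?IH ?andbF. Qed.

Lemma dd_free_ends_ascending_word L : incr L -> no_lonely_left (tshape L) ->
  dd_free (word L) && ends_ascending (word L).
Proof.
elim: L => [|l IHl x r IHr] //= /and3P[x_lt incr_l incr_r].
case/andP=> /andP[root_nll nll_l] nll_r.
have /andP[dd_l asc_l] := IHl incr_l nll_l.
have /andP[dd_r asc_r] := IHr incr_r nll_r.
move: x_lt; rewrite all_cat => /andP[_ x_lt_r].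
rewrite dd_free_cat_cons //=; move: root_nll; rewrite !is_node_word.
case: (word r) x_lt_r asc_r => [|y [|z s]] /= x_lt_r asc_r.
- by case: (word l).
- by rewrite ends_ascending_cat //= andbT in x_lt_r *.
- by rewrite ends_ascending_cat.
Qed.

Fixpoint right_spine_nll (L : ltree) : bool :=
  if L is LNode l _ r then no_lonely_left (tshape l) && right_spine_nll r
  else true.

Lemma dd_free_word_right_spine_nll L : incr L -> right_spine_nll L -> dd_free (word L).
Proof.
elim: L => //= l _ x r IHr /and3P[x_lt incr_l incr_r] /andP[nll_l spine_r].
have /andP[dd_l asc_l] := dd_free_ends_ascending_word incr_l nll_l.
by rewrite dd_free_cat_cons ?IHr //; move: x_lt; rewrite all_cat => /andP[].
Qed.

Fixpoint prune (k : nat) (L : ltree) : ltree :=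
  if L is LNode l x r then
    if x <= k then LNode (prune k l) x (prune k r) else LLeaf
  else LLeaf.

Lemma word_prune k L : incr L -> word (prune k L) = [seq y <- word L | y <= k].
Proof.
elim: L => [|l IHl x r IHr] //= /and3P[x_lt incr_l incr_r].
rewrite filter_cat /=; case: ifP => x_k; first by rewrite /= IHl // IHr.
rewrite -filter_cat (eq_in_filter (a2 := pred0)) ?filter_pred0 // => y.
by move=> /(allP x_lt) /=; lia.
Qed.

Lemma incr_prune k L : incr L -> incr (prune k L).
Proof.
elim: L => [|l IHl x r IHr] //= /and3P[x_lt incr_l incr_r].
case: ifP => //= _; rewrite IHl // IHr // !word_prune // -filter_cat all_filter !andbT.
by apply: sub_all x_lt => y /= ->; rewrite implybT.
Qed.

Lemma is_node_prune_rpreorder_label k t m :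
  is_node (tshape (prune k (rpreorder_label t m))) = is_node t && (m <= k).
Proof. by case: t => //= l r; case: ifP. Qed.

Lemma prune_rpreorder_label k t m : no_lonely_left t ->
  no_lonely_left (tshape (prune k (rpreorder_label t m))).
Proof.
elim: t m => //= l IHl r IHr m /andP[/andP[root_nll nll_l] nll_r].
case: ifP => //= m_k; rewrite !is_node_prune_rpreorder_label IHl // IHr // !andbT.
by case: (is_node l) (is_node r) root_nll => [] [] //=; lia.
Qed.

Lemma right_spine_prune_simsun_label k t m : no_lonely_left t ->
  right_spine_nll (prune k (simsun_label t m)).
Proof.
elim: t m => //= l _ r IHr m /andP[/andP[_ nll_l] nll_r].
by case: ifP => //= _; rewrite prune_rpreorder_label // IHr.
Qed.

Lemma last_simsun_label d t m : no_lonely_left t -> is_node t ->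
  last d (word (simsun_label t m)) = (m + bsize t).-1.
Proof.
elim: t m d => //= l _ r IHr m d /andP[/andP[root_nll _] nll_r] _.
rewrite last_cat /=; case: r root_nll nll_r IHr => [|r1 r2] root_nll nll_r IHr.
  by case: l root_nll => //= _; rewrite addn0 addn1.
by rewrite IHr //=; lia.
Qed.

Lemma lonely_left_word L : incr L -> ~~ no_lonely_left (tshape L) ->
  (exists p a b c s, word L = p ++ [:: a, b, c & s] /\ c < b < a) \/
  (exists p a b, word L = p ++ [:: a; b] /\ b < a).
Proof.
elim: L => [|l IHl x r IHr] //= /and3P[x_lt incr_l incr_r].
move: x_lt; rewrite all_cat => /andP[/allP x_lt_l _].
rewrite 2!negb_and negbK -orbA !is_node_word negbK.
case/or3P=> [/andP[l_ne /eqP r_nil]|lonely_l|lonely_r].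
- right; move: l_ne x_lt_l; rewrite r_nil; case/lastP: (word l) => [|p a] // _ x_lt_l.
  exists p, a, x; split; first by rewrite cat_rcons.
  by apply: x_lt_l; rewrite mem_rcons mem_head.
- case: (IHl incr_l lonely_l) => [[p [a [b [c [s [-> cba]]]]]]|[p [a [b [wl ba]]]]].
    by left; exists p, a, b, c, (s ++ x :: word r); rewrite -catA.
  left; exists p, a, b, x, (word r); rewrite wl -catA; split=> //.
  by rewrite ba andbT; apply: x_lt_l; rewrite wl mem_cat !inE eqxx !orbT.
- case: (IHr incr_r lonely_r) => [[p [a [b [c [s [-> cba]]]]]]|[p [a [b [-> ba]]]]].
    by left; exists (word l ++ x :: p), a, b, c, s; rewrite -catA.
  by right; exists (word l ++ x :: p), a, b; rewrite -catA.
Qed.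

Lemma AndI_URL n s : AndI n s -> URL n (tshape (Psi s)).
Proof.
case=> /is_perm_Psi[incr_L word_L size_L] andre_s; split=> //.
by apply: (@andre_tree_no_lonely_left wmax); rewrite -andreI_word // word_L.
Qed.

Lemma AndII_URL n s : AndII n s -> URL n (tshape (Psi s)).
Proof.
case=> /is_perm_Psi[incr_L word_L size_L] andre_s; split=> //.
by apply: (@andre_tree_no_lonely_left wmin); rewrite -andreII_word // word_L.
Qed.

Lemma simsun_URL n s : simsun n s -> URL n (tshape (Psi s)).
Proof.
case=> perm_s [last_s dd_s]; have [incr_L word_L size_L] := is_perm_Psi perm_s.
split=> //; have size_s : size s = n by rewrite -word_L size_word.
have mem_s y : y \in s -> 1 <= y <= n by rewrite (perm_mem perm_s) mem_iota; lia.
apply/negPn/negP => /(lonely_left_word incr_L); rewrite word_L.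
case=> [[p [a [b [c [s' [E /andP[c_b b_a]]]]]]] | [p [a [b [E b_a]]]]].
  have /dd_s : 1 <= a <= n by apply: mem_s; rewrite E mem_cat mem_head orbT.
  rewrite E filter_cat /= leqnn (ltnW b_a) (ltnW (ltn_trans c_b b_a)).
  by rewrite no_double_descentE dd_free_double_descent.
have := mem_s a; rewrite E mem_cat mem_head orbT => /(_ isT).
by move: last_s; rewrite -size_s nth_last E last_cat /=; lia.
Qed.

Lemma URL_AndI n t : URL n t -> exists2 s, AndI n s & tshape (Psi s) = t.
Proof.
case=> <- nll_t; have lab := labelled_preorder_label t 1.
exists (word (preorder_label t 1)).
  split; first by have := labelled_from_is_perm lab; rewrite tshape_preorder_label.
  by rewrite andreI_word ?andre_preorder_label // (labelled_from_incr lab).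
by rewrite Psi_word ?tshape_preorder_label // (labelled_from_incr lab).
Qed.

Lemma URL_AndII n t : URL n t -> exists2 s, AndII n s & tshape (Psi s) = t.
Proof.
case=> <- nll_t; have lab := labelled_rpreorder_label t 1.
exists (word (rpreorder_label t 1)).
  split; first by have := labelled_from_is_perm lab; rewrite tshape_rpreorder_label.
  by rewrite andreII_word ?andre_rpreorder_label // (labelled_from_incr lab).
by rewrite Psi_word ?tshape_rpreorder_label // (labelled_from_incr lab).
Qed.

Lemma URL_simsun n t : URL n t -> exists2 s, simsun n s & tshape (Psi s) = t.
Proof.
case=> <- nll_t; have lab := labelled_simsun_label t 1.
have incr_L := labelled_from_incr lab.
exists (word (simsun_label t 1)); last by rewrite Psi_word ?tshape_simsun_label.
have size_w : size (word (simsun_label t 1)) = bsize t.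
  by rewrite size_word tshape_simsun_label.
split; first by have := labelled_from_is_perm lab; rewrite tshape_simsun_label.
split=> [|k _].
  rewrite -{1}size_w nth_last; case: t nll_t {lab incr_L size_w} => // l r nll_t.
  by rewrite last_simsun_label.
rewrite no_double_descentE -word_prune //.
apply: dd_free_word_right_spine_nll; first exact: incr_prune.
exact: right_spine_prune_simsun_label.
Qed.

Theorem proposition2p4 (n : nat) : 1 <= n ->
  forall t : btree,
    (URL n t <-> exists sigma, AndI n sigma /\ tshape (Psi sigma) = t) /\
    (URL n t <-> exists sigma, AndII n sigma /\ tshape (Psi sigma) = t) /\
    (URL n t <-> exists sigma, simsun n sigma /\ tshape (Psi sigma) = t).
Proof.
move=> _ t; split; [|split]; split.
- by case/URL_AndI=> s; exists s.
- by case=> s [/AndI_URL + <-].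
- by case/URL_AndII=> s; exists s.
- by case=> s [/AndII_URL + <-].
- by case/URL_simsun=> s; exists s.
- by case=> s [/simsun_URL + <-].
Qed.
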